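(* Let $\mathcal{R}\subseteq\mathbb{R}^{\mathcal{S}\times\mathcal{A}}$ be a nonempty compact, not necessarily $s$-rectangular, reward uncertainty set, and let $C(\mathcal{R})=\bigcap\{\mathcal{R}^{\texttt{s}} : \mathcal{R}^{\texttt{s}} \text{ is } s\text{-rectangular and } \mathcal{R}\subseteq\mathcal{R}^{\texttt{s}}\}$ be the smallest $s$-rectangular set containing $\mathcal{R}$. Then for every stationary policy $\pi\in\Pi$, the robust value function $v^\pi_{C(\mathcal{R})}$ is a fixed point of the robust Bellman evaluation operator $\mathcal{T}^\pi_{\mathcal{R}}$, and the optimal robust value function $v^*_{C(\mathcal{R})}$ is a fixed point of the robust Bellman optimality operator $\mathcal{T}^*_{\mathcal{R}}$.
   Context: Finite MDP: finite state space $\mathcal{S}$, finite action space $\mathcal{A}$, transition kernel $P(\cdot|s,a)\in\Delta_{\mathcal{S}}$, discount factor $\gamma\in[0,1)$. $\Pi$ is the set of stationary randomized policies $\pi:\mathcal{S}\to\Delta_{\mathcal{A}}$, written $\pi_s(a)=\pi(a|s)$. For a reward $R\in\mathbb{R}^{\mathcal{S}\times\mathcal{A}}$ let $R^\pi(s)=\sum_a\pi_s(a)R(s,a)$, $P^\pi(s'|s)=\sum_a\pi_s(a)P(s'|s,a)$, $v^\pi_R=(I-\gamma P^\pi)^{-1}R^\pi$ and $(\mathcal{T}^\pi_R v)(s)=R^\pi(s)+\gamma\sum_{s'}P^\pi(s'|s)v(s')$. A set $\mathcal{R}'\subseteq\mathbb{R}^{\mathcal{S}\times\mathcal{A}}$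 is $s$-rectangular if $\mathcal{R}'=\times_{s\in\mathcal{S}}\mathcal{R}'_s$ with $\mathcal{R}'_s\subseteq\mathbb{R}^{\mathcal{A}}$ (i.e. the rows $R(s,\cdot)$ can be chosen independently across states). Robust Bellman evaluation operator: $(\mathcal{T}^\pi_{\mathcal{R}}v)(s)=\min_{R\in\mathcal{R}}(\mathcal{T}^\pi_R v)(s)$ for each $s$; robust Bellman optimality operator: $(\mathcal{T}^*_{\mathcal{R}}v)(s)=\max_{\pi\in\Pi}(\mathcal{T}^\pi_{\mathcal{R}}v)(s)$. For a compact $s$-rectangular set $\mathcal{R}'$, the robust value function is $v^\pi_{\mathcal{R}'}(s)=\min_{R\in\mathcal{R}'}v^\pi_R(s)$ and the optimal robust value function is $v^*_{\mathcal{R}'}(s)=\max_{\pi\in\Pi}v^\pi_{\mathcal{R}'}(s)$. *)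

From HB Require Import structures.
From mathcomp Require Import all_boot all_order all_algebra.
From mathcomp Require Import all_classical all_reals all_analysis.
Set Implicit Arguments. Unset Strict Implicit. Unset Printing Implicit Defensive.
Import Order.TTheory GRing.Theory Num.Theory.
Import numFieldNormedType.Exports.
Local Open Scope classical_set_scope.
Local Open Scope ring_scope.

(* States are 'I_n, actions are 'I_m.  A reward is a matrix R : 'M[R]_(n,m)
   with R s a = R(s,a); this type carries its canonical (normed) topology. *)

Section MDP.
Variables (R : realType) (n m : nat).

(* transition trans_kernel P s a s' = P(s'|s,a) *)
Definition trans_kernel := 'I_n -> 'I_m -> 'I_n -> R.
Definition is_trans_kernel (P : trans_kernel) : Prop :=
  forall s a, (forall s', 0 <= P s a s') /\ \sum_(s' < n) P s a s' = 1.

(* stationary randomized policies pi s a = pi(a|s) *)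
Definition policy := 'I_n -> 'I_m -> R.
Definition Policies : set policy :=
  [set pi | forall s, (forall a, 0 <= pi s a) /\ \sum_(a < m) pi s a = 1].

Definition Rpi (pi : policy) (Rw : 'M[R]_(n, m)) : 'cV[R]_n :=
  \col_s \sum_(a < m) pi s a * Rw s a.
Definition Ppi (P : trans_kernel) (pi : policy) : 'M[R]_n :=
  \matrix_(s, s') \sum_(a < m) pi s a * P s a s'.

Definition vpi (P : trans_kernel) (gamma : R) (pi : policy) (Rw : 'M[R]_(n, m))
  : 'I_n -> R :=
  fun s => (invmx (1%:M - gamma *: Ppi P pi) *m Rpi pi Rw) s ord0.

Definition Tpi (P : trans_kernel) (gamma : R) (pi : policy) (Rw : 'M[R]_(n, m))
  (v : 'I_n -> R) : 'I_n -> R :=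
  fun s => Rpi pi Rw s ord0 + gamma * \sum_(s' < n) Ppi P pi s s' * v s'.

Definition s_rectangular (X : set 'M[R]_(n, m)) : Prop :=
  exists Xs : 'I_n -> set 'rV[R]_m,
    X = [set Rw | forall s, Xs s (row s Rw)].

Definition rect_hull (X : set 'M[R]_(n, m)) : set 'M[R]_(n, m) :=
  \bigcap_(Y in [set Y | s_rectangular Y /\ X `<=` Y]) Y.

(* robust Bellman evaluation operator (min over R in X, i.e. the infimum,
   which is attained for compact X) *)
Definition robust_T (P : trans_kernel) (gamma : R) (X : set 'M[R]_(n, m))
  (pi : policy) (v : 'I_n -> R) : 'I_n -> R :=
  fun s => inf [set Tpi P gamma pi Rw v s | Rw in X].

Definition robust_Topt (P : trans_kernel) (gamma : R) (X : set 'M[R]_(n, m))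
  (v : 'I_n -> R) : 'I_n -> R :=
  fun s => sup [set robust_T P gamma X pi v s | pi in Policies].

Definition robust_v (P : trans_kernel) (gamma : R) (X : set 'M[R]_(n, m))
  (pi : policy) : 'I_n -> R :=
  fun s => inf [set vpi P gamma pi Rw s | Rw in X].

Definition robust_vopt (P : trans_kernel) (gamma : R) (X : set 'M[R]_(n, m))
  : 'I_n -> R :=
  fun s => sup [set robust_v P gamma X pi s | pi in Policies].

End MDP.

From HB Require Import structures.
From mathcomp Require Import all_boot all_order all_algebra.
From mathcomp Require Import all_classical all_reals all_analysis.
From mathcomp Require Import lra.
Import Order.TTheory GRing.Theory Num.Theory.
Import numFieldNormedType.Exports.
Local Open Scope classical_set_scope.
Local Open Scope ring_scope.

(* For a fixed policy, a reward in [C(R)] may take its row at each state from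
   a different element of [R], so the robust value of [C(R)] is the value of
   the plain MDP whose reward at [s] is the worst case [inf_{R in R} R^pi(s)].
   The robust operator of [R] is the Bellman operator of that same MDP, hence
   has this value as fixed point.  For optimality, policies can likewise be
   glued state by state, and comparing with near-optimal glued policies
   through the contraction [v |-> r + gamma Q v] ([Q] stochastic) shows that
   the optimal value satisfies the Bellman equation. *)

Set Implicit Arguments. Unset Strict Implicit.

Section Bellman.
Variables (R : realType) (n : nat) (Q : 'M[R]_n) (gamma : R).
Hypotheses (Q_ge0 : forall i j, 0 <= Q i j) (Q_sum1 : forall i, \sum_j Q i j = 1).
Hypotheses (gamma_ge0 : 0 <= gamma) (gamma_lt1 : gamma < 1).

Definition bellman (f x : 'I_n -> R) (i : 'I_n) : R :=
  f i + gamma * \sum_j Q i j * x j.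

Lemma ler_bellman f h x y : (forall i, f i <= h i) -> (forall i, x i <= y i) ->
  forall i, bellman f x i <= bellman h y i.
Proof.
move=> fh xy i; apply: lerD => //; apply: ler_wpM2l => //.
by apply: ler_sum => j _; apply: ler_wpM2l.
Qed.

Lemma bellmanDc f x c i :
  bellman f (fun j => x j + c) i = bellman f x i + gamma * c.
Proof.
rewrite /bellman -addrA -mulrDr; congr (_ + gamma * _).
under eq_bigr do rewrite mulrDr.
by rewrite big_split /= -mulr_suml Q_sum1 mul1r.
Qed.

(* Evaluate the hypothesis at a minimiser of [x]. *)
Lemma bellman_cst_lb c x : (forall i, bellman (fun=> c) x i <= x i) ->
  forall i, c / (1 - gamma) <= x i.
Proof.
move=> hx i; have [k _ kmin] := @arg_minP _ _ _ i predT x isT.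
have : c + gamma * x k <= x k.
  apply: le_trans (hx k); rewrite lerD2l ler_wpM2l //.
  rewrite -[leLHS]mul1r -(Q_sum1 k) mulr_suml.
  by apply: ler_sum => j _; apply: ler_wpM2l => //; apply: kmin.
move=> ck; apply: le_trans (kmin i isT); rewrite ler_pdivrMr ?subr_gt0 //.
by rewrite mulrBr mulr1; lra.
Qed.

Lemma bellman_cst_ub c x : (forall i, x i <= bellman (fun=> c) x i) ->
  forall i, x i <= c / (1 - gamma).
Proof.
move=> hx i; rewrite -lerN2 -mulNr.
apply: (@bellman_cst_lb (- c) (fun j => - x j)) => j.
rewrite /bellman -lerN2 opprK opprD opprK -mulrN -sumrN.
by under eq_bigr do rewrite mulrN opprK; apply: hx.
Qed.

Lemma subsolution_le_fix f x w c : (forall i, x i = bellman f x i) ->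
  (forall i, w i - c <= bellman f w i) -> forall i, w i - c / (1 - gamma) <= x i.
Proof.
move=> hx hw i.
suff : - c / (1 - gamma) <= x i - w i by rewrite mulNr; lra.
apply: (@bellman_cst_lb (- c) (fun j => x j - w j)) => {}i.
have := hw i; rewrite [x i]hx /bellman.
have -> : \sum_j Q i j * (x j - w j) = \sum_j Q i j * x j - \sum_j Q i j * w j.
  by rewrite -sumrB; apply: eq_bigr => j _; rewrite mulrBr.
lra.
Qed.

Lemma unitmx_discount : (1%:M - gamma *: Q) \in unitmx.
Proof.
rewrite -unitmx_tr -row_free_unit; apply: inj_row_free => v.
move=> /(congr1 trmx); rewrite trmx_mul trmxK trmx0 mulmxBl mul1mx -scalemxAl.
move=> /matrixP x_fix; set x := fun i => v ord0 i.
have hx : forall i, x i = bellman (fun=> 0) x i.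
  move=> i; have /eqP := x_fix i ord0.
  rewrite !mxE subr_eq0 /bellman /x add0r => /eqP ->; congr (_ * _).
  by apply: eq_bigr => j _; rewrite !mxE.
have x_ge0 : forall i, 0 / (1 - gamma) <= x i.
  by apply: bellman_cst_lb => i; rewrite -hx.
have x_le0 : forall i, x i <= 0 / (1 - gamma).
  by apply: bellman_cst_ub => i; rewrite -hx.
apply/rowP => i; apply/eqP; rewrite mxE eq_le.
by have := x_ge0 i; have := x_le0 i; rewrite mul0r => -> ->.
Qed.

Definition bellman_fix (f : 'I_n -> R) : 'I_n -> R :=
  fun i => (invmx (1%:M - gamma *: Q) *m \col_j f j) i ord0.

Lemma bellman_fixE f i : bellman_fix f i = bellman f (bellman_fix f) i.
Proof.
rewrite /bellman /bellman_fix; set x := invmx _ *m _.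
have : (1%:M - gamma *: Q) *m x = \col_j f j by rewrite mulKVmx // unitmx_discount.
move=> /(congr1 (fun M : 'cV[R]_n => M i ord0)).
rewrite mulmxBl mul1mx -scalemxAl !mxE => <-.
by rewrite subrK.
Qed.

Lemma bellman_fix_ub c f : (forall i, f i <= c) ->
  forall i, bellman_fix f i <= c / (1 - gamma).
Proof.
move=> fc; apply: bellman_cst_ub => i; rewrite bellman_fixE.
exact: ler_bellman.
Qed.

End Bellman.

Section InfSup.
Variable R : realType.

Lemma inf_eq_adherent_lb (S : set R) a : (forall y, S y -> a <= y) ->
  (forall e, 0 < e -> exists2 y, S y & y <= a + e) -> inf S = a.
Proof.
move=> lb adh; have [y0 Sy0 _] := adh 1 ltr01.
apply/eqP; rewrite eq_le [a <= _]lb_le_inf ?andbT; last 2 first.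
- by exists y0.
- by move=> y /lb.
apply/ler_addgt0Pr => e e0; have [y Sy ye] := adh e e0.
by apply: le_trans ye; apply: ge_inf => //; exists a.
Qed.

Lemma sup_eq_adherent_ub (S : set R) a : (forall y, S y -> y <= a) ->
  (forall e, 0 < e -> exists2 y, S y & a - e <= y) -> sup S = a.
Proof.
move=> ub adh; have [y0 Sy0 _] := adh 1 ltr01.
apply/eqP; rewrite eq_le [sup S <= a]ge_sup /=; last 2 first.
- by exists y0.
- by move=> y /ub.
apply/ler_addgt0Pr => e e0; have [y Sy ey] := adh e e0.
by rewrite -lerBlDr; apply: le_trans ey _; apply: ub_le_sup => //; exists a.
Qed.

End InfSup.

Section RectHull.
Variables (R : realType) (n m : nat) (X : set 'M[R]_(n, m)).

Lemma rect_hull_row Rw s : rect_hull X Rw ->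
  exists2 Rw', X Rw' & row s Rw = row s Rw'.
Proof.
pose rows := fun s => [set row s M | M in X].
have rect_rows : s_rectangular [set M | forall s, rows s (row s M)].
  by exists rows.
move=> /(_ _ (conj rect_rows _)) hull_rows.
have [|Rw' XRw' <-] := hull_rows _ s; first by move=> M XM s'; exists M.
by exists Rw'.
Qed.

Lemma rect_hull_glue (F : 'I_n -> 'M[R]_(n, m)) : (forall s, X (F s)) ->
  rect_hull X (\matrix_(s, a) F s s a).
Proof.
move=> XF Y [[Ys ->] XY] s /=.
have -> : row s (\matrix_(s, a) F s s a) = row s (F s).
  by apply/rowP => a; rewrite !mxE.
exact: XY.
Qed.

End RectHull.

Section Policies.
Variables (R : realType) (n m : nat).
Implicit Types (pi : policy R n m) (Rw : 'M[R]_(n, m)).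

Lemma Policies_glue (F : 'I_n -> policy R n m) : (forall s, Policies (F s)) ->
  Policies (fun s => F s s).
Proof. by move=> polF s; apply: polF. Qed.

Lemma Ppi_ge0 (P : trans_kernel R n m) pi : is_trans_kernel P -> Policies pi ->
  forall s s', 0 <= Ppi P pi s s'.
Proof.
move=> hP hpi s s'; rewrite mxE; apply: sumr_ge0 => a _.
by apply: mulr_ge0; [apply: (hpi s).1 | apply: (hP s a).1].
Qed.

Lemma Ppi_sum1 (P : trans_kernel R n m) pi : is_trans_kernel P -> Policies pi ->
  forall s, \sum_s' Ppi P pi s s' = 1.
Proof.
move=> hP hpi s; under eq_bigr do rewrite mxE.
rewrite exchange_big /= -(hpi s).2; apply: eq_bigr => a _.
by rewrite -mulr_sumr (hP s a).2 mulr1.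
Qed.

Lemma Rpi_row pi Rw Rw' s : row s Rw = row s Rw' ->
  Rpi pi Rw s ord0 = Rpi pi Rw' s ord0.
Proof.
move=> /rowP eq_row; rewrite !mxE; apply: eq_bigr => a _.
by have := eq_row a; rewrite !mxE => ->.
Qed.

Lemma Rpi_norm_le pi Rw s (B : R) : Policies pi -> (forall a, `|Rw s a| <= B) ->
  `|Rpi pi Rw s ord0| <= B.
Proof.
move=> hpi RwB; rewrite mxE; apply: le_trans (ler_norm_sum _ _ _) _.
rewrite -[leRHS]mul1r -(hpi s).2 mulr_suml; apply: ler_sum => a _.
by rewrite normrM ger0_norm ?(hpi s).1 // ler_wpM2l ?(hpi s).1.
Qed.

Lemma vpiE (P : trans_kernel R n m) gamma pi Rw :
  vpi P gamma pi Rw = bellman_fix (Ppi P pi) gamma (fun s => Rpi pi Rw s ord0).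
Proof.
rewrite /bellman_fix; have -> : \col_s Rpi pi Rw s ord0 = Rpi pi Rw.
  by apply/colP => s; rewrite mxE.
by [].
Qed.

End Policies.

Section Robust.
Variables (R : realType) (n m : nat) (P : trans_kernel R n m) (gamma : R).
Variables (X : set 'M[R]_(n, m)) (B : R).
Hypotheses (hP : is_trans_kernel P) (gamma_ge0 : 0 <= gamma) (gamma_lt1 : gamma < 1).
Hypotheses (X_neq0 : X !=set0)
  (X_bounded : forall Rw, X Rw -> forall s a, `|Rw s a| <= B).
Implicit Types (pi : policy R n m) (v : 'I_n -> R).

Definition worst_reward pi s : R := inf [set Rpi pi Rw s ord0 | Rw in X].

Definition worst_value pi : 'I_n -> R :=
  bellman_fix (Ppi P pi) gamma (worst_reward pi).

Lemma has_inf_Rpi pi s : Policies pi -> has_inf [set Rpi pi Rw s ord0 | Rw in X].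
Proof.
move=> hpi; split; first by have [Rw XRw] := X_neq0; exists (Rpi pi Rw s ord0), Rw.
exists (- B) => _ [Rw XRw <-].
exact/lerNnormlW/(Rpi_norm_le hpi (X_bounded XRw s)).
Qed.

Lemma worst_reward_le pi Rw s : Policies pi -> X Rw ->
  worst_reward pi s <= Rpi pi Rw s ord0.
Proof. by move=> hpi XRw; apply: ge_inf; [case: (has_inf_Rpi s hpi) | exists Rw]. Qed.

Lemma worst_reward_adherent pi s e : Policies pi -> 0 < e ->
  exists2 Rw, X Rw & Rpi pi Rw s ord0 < worst_reward pi s + e.
Proof.
move=> hpi e_gt0.
by have [_ [Rw XRw <-] ?] := inf_adherent e_gt0 (has_inf_Rpi s hpi); exists Rw.
Qed.

Lemma worst_reward_ub pi s : Policies pi -> worst_reward pi s <= B.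
Proof.
move=> hpi; have [Rw XRw] := X_neq0; apply: le_trans (worst_reward_le s hpi XRw) _.
exact/ler_normlW/(Rpi_norm_le hpi (X_bounded XRw s)).
Qed.

Lemma robust_T_worst pi v : Policies pi ->
  robust_T P gamma X pi v = bellman (Ppi P pi) gamma (worst_reward pi) v.
Proof.
move=> hpi; apply/funext => s; apply: inf_eq_adherent_lb.
  by move=> _ [Rw XRw <-]; rewrite /Tpi lerD2r; apply: worst_reward_le.
move=> e e_gt0; have [Rw XRw lt_Rw] := worst_reward_adherent s hpi e_gt0.
exists (Tpi P gamma pi Rw v s); first by exists Rw.
by rewrite /Tpi /bellman; apply: ltW; lra.
Qed.

Lemma robust_v_rect_hull pi : Policies pi ->
  robust_v P gamma (rect_hull X) pi = worst_value pi.
Proof.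
move=> hpi; have Q_ge0 := Ppi_ge0 hP hpi; have Q_sum1 := Ppi_sum1 hP hpi.
have fixE := bellman_fixE Q_ge0 Q_sum1 gamma_ge0 gamma_lt1.
have le_fix := subsolution_le_fix Q_ge0 Q_sum1 gamma_ge0 gamma_lt1.
apply/funext => s; apply: inf_eq_adherent_lb.
  move=> _ [Rw hull_Rw <-]; rewrite vpiE.
  have := le_fix _ _ (worst_value pi) 0 (fixE _) _ s; rewrite mul0r !subr0; apply.
  move=> i; rewrite subr0 [leLHS]fixE; apply: ler_bellman => // j.
  by have [Rw' XRw' /Rpi_row ->] := rect_hull_row j hull_Rw; apply: worst_reward_le.
move=> e e_gt0; have slack_gt0 : 0 < e * (1 - gamma) by rewrite mulr_gt0 ?subr_gt0.
have /choice[F FP] : forall i : 'I_n, exists Rw : 'M[R]_(n, m), X Rw /\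
    Rpi pi Rw i ord0 < worst_reward pi i + e * (1 - gamma).
  by move=> i; have [Rw ? ?] := worst_reward_adherent i hpi slack_gt0; exists Rw.
pose Rw := \matrix_(i, a) F i i a.
exists (vpi P gamma pi Rw s).
  by exists Rw => //; apply: rect_hull_glue => i; case: (FP i).
rewrite vpiE; set w := bellman_fix _ _ _.
have := le_fix _ (worst_value pi) w (e * (1 - gamma)) (fixE _) _ s.
rewrite mulfK ?subr_eq0 ?gt_eqF // lerBlDr; apply => i.
rewrite {1}/w fixE -/w /bellman.
have -> : Rpi pi Rw i ord0 = Rpi pi (F i) i ord0.
  by apply: Rpi_row; apply/rowP => a; rewrite !mxE.
by have [_ /ltW] := FP i; lra.
Qed.

Lemma robust_T_rect_hull_fix pi : Policies pi ->
  robust_T P gamma X pi (robust_v P gamma (rect_hull X) pi)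
  = robust_v P gamma (rect_hull X) pi.
Proof.
move=> hpi; rewrite robust_v_rect_hull // robust_T_worst //.
apply/funext => s; rewrite [RHS]bellman_fixE //; [exact: Ppi_ge0 | exact: Ppi_sum1].
Qed.

Lemma bellman_row_eq pi pi' v s : pi s = pi' s ->
  bellman (Ppi P pi) gamma (worst_reward pi) v s
  = bellman (Ppi P pi') gamma (worst_reward pi') v s.
Proof.
move=> eq_s; rewrite /bellman /worst_reward.
have -> : [set Rpi pi Rw s ord0 | Rw in X] = [set Rpi pi' Rw s ord0 | Rw in X].
  by apply: eq_imagel => Rw _; rewrite !mxE eq_s.
by congr (_ + gamma * _); apply: eq_bigr => j _; rewrite !mxE eq_s.
Qed.

Section Optimality.
Hypothesis Policies_neq0 : @Policies R n m !=set0.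

Definition opt_value s : R := sup [set worst_value pi s | pi in @Policies R n m].

Local Notation backup pi := (bellman (Ppi P pi) gamma (worst_reward pi) opt_value).

Lemma has_sup_worst_value s : has_sup [set worst_value pi s | pi in @Policies R n m].
Proof.
split; first by have [pi hpi] := Policies_neq0; exists (worst_value pi s), pi.
exists (B / (1 - gamma)) => _ [pi hpi <-].
apply: bellman_fix_ub => //; [exact: Ppi_ge0 | exact: Ppi_sum1 | move=> i].
exact: worst_reward_ub.
Qed.

Lemma worst_value_le_opt pi s : Policies pi -> worst_value pi s <= opt_value s.
Proof.
by move=> hpi; apply: ub_le_sup; [case: (has_sup_worst_value s) | exists pi].
Qed.

Lemma opt_value_adherent s e : 0 < e ->
  exists2 pi, Policies pi & opt_value s - e < worst_value pi s.
Proof.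
move=> e_gt0.
by have [_ [pi hpi <-] ?] := sup_adherent e_gt0 (has_sup_worst_value s); exists pi.
Qed.

Lemma worst_value_le_backup pi s : Policies pi -> worst_value pi s <= backup pi s.
Proof.
move=> hpi; have Q_ge0 := Ppi_ge0 hP hpi.
rewrite /worst_value bellman_fixE //; last exact: Ppi_sum1.
by apply: ler_bellman => // j; apply: worst_value_le_opt.
Qed.

(* Glue [pi] at [s0] with near-optimal policies elsewhere; the glued policy
   [sig] has a value within [d] of [opt_value], so its backup at [s0], which
   is that of [pi], exceeds [opt_value s0] by at most [gamma * d]. *)
Lemma backup_le_opt pi s0 : Policies pi -> backup pi s0 <= opt_value s0.
Proof.
move=> hpi; apply/ler_addgt0Pr => d d_gt0.
have [le_opt|opt_lt] := lerP (backup pi s0) (opt_value s0).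
  by apply: le_trans le_opt _; rewrite lerDl ltW.
have slack_gt0 : 0 < d * (1 - gamma) by rewrite mulr_gt0 ?subr_gt0.
have /choice[F FP] : forall s : 'I_n, exists pi' : policy R n m,
    Policies pi' /\ opt_value s - d * (1 - gamma) <= backup pi' s.
  move=> s; have [pi' hpi' lt_pi'] := opt_value_adherent s slack_gt0.
  exists pi'; split => //.
  exact: le_trans (ltW lt_pi') (worst_value_le_backup s hpi').
pose choose s := if s == s0 then pi else F s.
pose sig s := choose s s.
have hsig : Policies sig.
  by apply: Policies_glue => s; rewrite /choose; case: eqP => _; [| case: (FP s)].
have Q_ge0 := Ppi_ge0 hP hsig; have Q_sum1 := Ppi_sum1 hP hsig.
have backup_sig s : backup sig s = backup (choose s) s by apply: bellman_row_eq.
have sub_sig s : opt_value s - d * (1 - gamma) <= backup sig s.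
  rewrite backup_sig /choose; case: eqP => [->|_]; last by case: (FP s).
  by apply: le_trans (ltW opt_lt); rewrite lerBlDr lerDl ltW.
have sig_near s : opt_value s <= worst_value sig s + d.
  have := subsolution_le_fix Q_ge0 Q_sum1 gamma_ge0 gamma_lt1
    (bellman_fixE Q_ge0 Q_sum1 gamma_ge0 gamma_lt1 _) sub_sig s.
  by rewrite mulfK ?subr_eq0 ?gt_eqF // lerBlDr.
have -> : backup pi s0 = backup sig s0 by rewrite backup_sig /choose eqxx.
apply: le_trans (ler_bellman Q_ge0 gamma_ge0 (fun=> lexx _) sig_near s0) _.
rewrite bellmanDc // -bellman_fixE // -/(worst_value sig).
have := worst_value_le_opt s0 hsig.
have := ler_piMl (ltW d_gt0) (ltW gamma_lt1).
lra.
Qed.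

Lemma robust_Topt_rect_hull_fix :
  robust_Topt P gamma X (robust_vopt P gamma (rect_hull X))
  = robust_vopt P gamma (rect_hull X).
Proof.
have -> : robust_vopt P gamma (rect_hull X) = opt_value.
  apply/funext => s; congr sup; apply: eq_imagel => pi hpi.
  by rewrite robust_v_rect_hull.
apply/funext => s; apply: sup_eq_adherent_ub.
  by move=> _ [pi hpi <-]; rewrite robust_T_worst //; apply: backup_le_opt.
move=> e e_gt0; have [pi hpi lt_pi] := opt_value_adherent s e_gt0.
exists (robust_T P gamma X pi opt_value s); first by exists pi.
rewrite robust_T_worst //; apply: le_trans (ltW lt_pi) _.
exact: worst_value_le_backup.
Qed.

End Optimality.

End Robust.

Lemma compact_mx_entry_bounded (R : realType) (n m : nat) (X : set 'M[R]_(n, m)) :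
  compact X -> exists B, forall Rw, X Rw -> forall s a, `|Rw s a| <= B.
Proof.
move=> /compact_bounded[M [_ XM]]; exists (M + 1) => Rw XRw s a.
apply: le_trans (XM _ _ _ XRw); last by rewrite ltrDl.
by rewrite [leRHS]/Num.Def.normr /= mx_normrE; apply/bigmax_geP; right; exists (s, a).
Qed.

Unset Implicit Arguments.

Theorem proposition1 (R : realType) (n m : nat) (P : trans_kernel R n m)
  (gamma : R) (X : set 'M[R]_(n, m)) :
  is_trans_kernel P -> 0 <= gamma -> gamma < 1 ->
  X !=set0 -> compact X ->
  (forall pi, Policies pi ->
     robust_T P gamma X pi (robust_v P gamma (rect_hull X) pi)
     = robust_v P gamma (rect_hull X) pi) /\
  robust_Topt P gamma X (robust_vopt P gamma (rect_hull X))
  = robust_vopt P gamma (rect_hull X).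
Proof.
move=> hP gamma_ge0 gamma_lt1 X_neq0 /compact_mx_entry_bounded[B X_bounded].
have robust := robust_T_rect_hull_fix hP gamma_ge0 gamma_lt1 X_neq0 X_bounded.
have optimal := robust_Topt_rect_hull_fix hP gamma_ge0 gamma_lt1 X_neq0 X_bounded.
split => //; have [/optimal //|Policies_eq0] := pselect (@Policies R n m !=set0).
have Policies_set0 : @Policies R n m = set0.
  by apply/seteqP; split => // pi hpi; apply: Policies_eq0; exists pi.
by apply/funext => s; rewrite /robust_Topt /robust_vopt Policies_set0 !image_set0.
Qed.
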